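(* (i) $H^\infty$ acts transitively on $\Sigma$; (ii) $H^\infty[3]$ acts transitively on $\Sigma[3]$; (iii) for each $\alpha\in\Sigma$, the set of elements of $\Sigma$ orthogonal to $\alpha$ equals $g(\Sigma[3])$ for some $g\in H^\infty$; (iv) for each $\alpha\in\Sigma$, the stabilizer of $\alpha$ in $H^\infty$ contains a subgroup conjugate (in $H^\infty$) to $H^\infty[3]$, where $H^\infty[3]$ is regarded as acting on $\mathbb{R}^4$ by fixing the first coordinate.
   Context: Let $\tau=(1+\sqrt5)/2$, $\tau'=(1-\sqrt5)/2$. Let $\Delta\subset\mathbb{R}^4$ be the set of 120 vectors consisting of: the 8 vectors obtained from $(\pm1,0,0,0)$ by permuting coordinates; the 16 vectors $\frac12(\pm1,\pm1,\pm1,\pm1)$; and the 96 vectors obtained from $\frac12(0,\pm1,\pm\tau',\pm\tau)$ (all sign choices) by even permutations of the coordinates; $\Delta'$ is its image under $\tau\leftrightarrow\tau'$ in each coordinate. For a unit vector $a$, $r_a(x)=x-2(x\cdot a)a$; $H^\infty$ is the group generated by $r_a$, $a\in\Delta\cup\Delta'$, and $\Sigma=H^\infty(\Delta\cup\Delta')$. Let $V=\{x\in\mathbb{R}^4:x_1=0\}$, $\Delta[3]=\Delta\cap V$, $\Delta[3]'=\Delta'\cap V$, $H^\infty[3]$ the group of orthogonal maps of $V$ generated by $r_a$, $a\in\Delta[3]\cup\Delta[3]'$, and $\Sigma[3]=H^\infty[3](\Delta[3]\cup\Delta[3]')$. *)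

From HB Require Import structures.
From mathcomp Require Import all_boot all_order all_algebra all_fingroup.
Set Implicit Arguments. Unset Strict Implicit. Unset Printing Implicit Defensive.
Import Order.TTheory GRing.Theory Num.Theory.
Local Open Scope ring_scope.

Section Defs.
Variable R : rcfType.

(* vectors of R^4 are row vectors; a linear map g acts by x |-> x *m g *)
Definition vec := 'rV[R]_4.
Definition dot (x y : vec) : R := (x *m y^T) 0 0.

Definition tau : R := (1 + Num.sqrt 5) / 2.
Definition tau' : R := (1 - Num.sqrt 5) / 2.

(* the reflection r_a(x) = x - 2 (x.a) a, as a matrix acting on the right *)
Definition refl (a : vec) : 'M[R]_4 := 1%:M - 2 *: (a^T *m a).

(* DeltaGen t t' : the 120 vectors, with t' and t in the 3rd/4th slots of the
   base vector (0,1,t',t).  Delta = DeltaGen tau tau',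
   Delta' = DeltaGen tau' tau (image under tau <-> tau'). *)
Definition DeltaGen (t t' : R) (x : vec) : Prop :=
  (exists (i : 'I_4) (b : bool), x = (-1) ^+ b *: delta_mx 0 i)
  \/ (exists b : {ffun 'I_4 -> bool}, x = \row_i ((-1) ^+ b i / 2))
  \/ (exists s : 'S_4, ~~ odd_perm s /\
        exists b : {ffun 'I_4 -> bool},
          x = \row_i ((-1) ^+ b (s i) * [:: 0; 1; t'; t]`_(s i) / 2)).

Definition Delta : vec -> Prop := DeltaGen tau tau'.
Definition Delta' : vec -> Prop := DeltaGen tau' tau.
Definition DD (a : vec) : Prop := Delta a \/ Delta' a.

Definition DD3 (a : vec) : Prop := DD a /\ a 0 0 = 0.

Inductive GenGroup (S : vec -> Prop) : 'M[R]_4 -> Prop :=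
  | GG_one : GenGroup S 1%:M
  | GG_gen a : S a -> GenGroup S (refl a)
  | GG_mul g h : GenGroup S g -> GenGroup S h -> GenGroup S (g *m h)
  | GG_inv g : GenGroup S g -> GenGroup S (invmx g).

Definition Hinf := GenGroup DD.
Definition H3 := GenGroup DD3.

Definition Orbit (S : vec -> Prop) (x : vec) : Prop :=
  exists g a, GenGroup S g /\ S a /\ x = a *m g.

Definition Sigma := Orbit DD.
Definition Sigma3 := Orbit DD3.

End Defs.

From HB Require Import structures.
From mathcomp Require Import all_boot all_order all_algebra all_fingroup.
From mathcomp Require Import zify ring.
Set Implicit Arguments. Unset Strict Implicit. Unset Printing Implicit Defensive.
Import Order.TTheory GRing.Theory Num.Theory.
Local Open Scope ring_scope.

(* Every root in Delta u Delta' is [w / 2] with [w] in [Z[tau]^4] and [w . w = 4], and the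
   reflection in such a root sends [w / 2^k] with [w . w = 4^k] to a vector of the same
   kind at level [k + 1]; so [Sigma] consists of such vectors.  A finite computation in
   [Z[tau]] shows that reflections in Delta u Delta' carry every [w / 2] with [w . w = 4]
   to [e_1], and reflections in Delta[3] u Delta[3]' carry those with [w_1 = 0] to [e_2];
   this gives transitivity (i) and (ii).  For [w / 2^k] in [Sigma] with [w_1 = 0] and
   [k >= 2], either [w] is divisible by [2], or (by a check of residues mod [4]) a reflection
   in a root [(0, +-1, +-tau', +-tau) / 2] or [(0, +-1, +-tau, +-tau') / 2] makes its image
   divisible by [4]; either way the level drops, so [Sigma] meets [V] exactly in [Sigma[3]].
   Writing [alpha = e_1 h], this yields (iii) with [g = h], and (iv) since [H^infty[3]] fixes
   [e_1].  Identities are transferred between [Z[tau]] and [R] through the embedding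
   [a + b tau], injective because [sqrt 5] is irrational. *)

(** * Arithmetic in [Z[tau]] *)

(* [(a, b) : zt] stands for [a + b tau] in [Z[tau]], where [tau^2 = tau + 1]. *)
Definition zt := (int * int)%type.
Definition zt_add (x y : zt) : zt := (x.1 + y.1, x.2 + y.2).
Definition zt_mul (x y : zt) : zt :=
  (x.1 * y.1 + x.2 * y.2, x.1 * y.2 + x.2 * y.1 + x.2 * y.2).
Definition zt_scale (n : int) (x : zt) : zt := (n * x.1, n * x.2).
Definition zt_dvd (m : int) (x : zt) : bool := (m %| x.1)%Z && (m %| x.2)%Z.
Definition zt_div (m : int) (x : zt) : zt := ((x.1 %/ m)%Z, (x.2 %/ m)%Z).
Definition zt_mod (m : int) (x : zt) : zt := ((x.1 %% m)%Z, (x.2 %% m)%Z).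
Definition zt_sign (b : bool) (x : zt) : zt := if b then zt_scale (-1) x else x.
Definition pow4 (k : nat) : zt := (4 ^+ k, 0).

Definition z0 : zt := (0, 0).
Definition z1 : zt := (1, 0).
Definition z2 : zt := (2, 0).
Definition ztau : zt := (0, 1).
Definition ztau' : zt := (1, -1).

Definition zvec := (zt * zt * zt * zt)%type.
Definition zv0 (w : zvec) : zt := w.1.1.1.
Definition zv1 (w : zvec) : zt := w.1.1.2.
Definition zv2 (w : zvec) : zt := w.1.2.
Definition zv3 (w : zvec) : zt := w.2.
Definition zvec_map (f : zt -> zt) (w : zvec) : zvec :=
  (f (zv0 w), f (zv1 w), f (zv2 w), f (zv3 w)).
Definition zvec_add (w u : zvec) : zvec :=
  (zt_add (zv0 w) (zv0 u), zt_add (zv1 w) (zv1 u),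
   zt_add (zv2 w) (zv2 u), zt_add (zv3 w) (zv3 u)).
Definition zvec_dot (w u : zvec) : zt :=
  zt_add (zt_add (zt_add (zt_mul (zv0 w) (zv0 u)) (zt_mul (zv1 w) (zv1 u)))
                 (zt_mul (zv2 w) (zv2 u))) (zt_mul (zv3 w) (zv3 u)).
Definition zvec_dvd (m : int) (w : zvec) : bool :=
  [&& zt_dvd m (zv0 w), zt_dvd m (zv1 w), zt_dvd m (zv2 w) & zt_dvd m (zv3 w)].

(* [2 w - (w . u) u]: the reflection of [w / 2^k] in [u / 2], times [2^(k+1)]. *)
Definition zvec_refl (w u : zvec) : zvec :=
  let d := zvec_dot w u in
  zvec_add (zvec_map (zt_scale 2) w) (zvec_map (fun y => zt_scale (-1) (zt_mul d y)) u).

(* The reflection of [w / 2] in [u / 2] is [zvec_refl w u / 4]; [zclosure n U S] collects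
   the vectors [w] of [S] and the images of [w / 2] under at most [n] reflections in roots
   [u / 2], [u] in [U], that are again of the form [w' / 2]. *)
Definition refl_step (w u : zvec) : option zvec :=
  let r := zvec_refl w u in
  if zvec_dvd 2 r then Some (zvec_map (zt_div 2) r) else None.
Definition grow (U S : seq zvec) : seq zvec :=
  undup (S ++ pmap id [seq refl_step w u | w <- S, u <- U]).
Definition zclosure (n : nat) (U S : seq zvec) : seq zvec := iter n (grow U) S.

Definition zunit (i : nat) : zvec :=
  (if i == 0%N then z2 else z0, if i == 1%N then z2 else z0,
   if i == 2%N then z2 else z0, if i == 3%N then z2 else z0).
Definition zhalf (b : bool * bool * bool * bool) : zvec :=
  (zt_sign b.1.1.1 z1, zt_sign b.1.1.2 z1, zt_sign b.1.2 z1, zt_sign b.2 z1).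
Definition zgolden (x y : zt) (b : bool * bool * bool) : zvec :=
  (z0, zt_sign b.1.1 z1, zt_sign b.1.2 x, zt_sign b.2 y).

Definition U3 : seq zvec :=
  [:: zunit 1; zunit 2; zunit 3;
      zgolden ztau' ztau (false, false, false); zgolden ztau ztau' (false, false, false)].
Definition U4 : seq zvec :=
  [:: zunit 0, zhalf (false, false, false, false), zhalf (false, true, false, false) & U3].

Definition bools := [:: false; true].
Definition Ures : seq zvec :=
  [seq zgolden xy.1 xy.2 b | xy <- [:: (ztau', ztau); (ztau, ztau')],
     b <- [seq (b12, b3) | b12 <- [seq (b1, b2) | b1 <- bools, b2 <- bools], b3 <- bools]].

Definition box (s t : seq zt) : seq zvec :=
  [seq (x, d) | x <- [seq (y, c) | y <- [seq (a, b) | a <- s, b <- t], c <- t], d <- t].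

(* [2 a^2 + 2 a b + 3 b^2] is [|a + b tau|^2 + |a + b tau'|^2]. *)
Definition small_zt : seq zt :=
  [seq x <- [seq (a, b) | a <- [:: -2; -1; 0; 1; 2], b <- [:: -2; -1; 0; 1; 2]] |
     2 * x.1 * x.1 + 2 * x.1 * x.2 + 3 * x.2 * x.2 <= 8].
Definition residues4 : seq zt := [seq (a, b) | a <- [:: 0; 1; 2; 3], b <- [:: 0; 1; 2; 3]].

Definition cl4 := zclosure 6 U4 [:: zunit 0].
Definition cl3 := zclosure 6 U3 [:: zunit 1].

Lemma cl4_complete :
  all (fun w => (zvec_dot w w == pow4 1) ==> (w \in cl4)) (box small_zt small_zt).
Proof. by vm_compute. Qed.

Lemma cl3_complete :
  all (fun w => (zvec_dot w w == pow4 1) ==> (w \in cl3)) (box [:: z0] small_zt).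
Proof. by vm_compute. Qed.

Lemma residues_reflectable :
  all (fun w => zt_dvd 4 (zvec_dot w w) && ~~ zvec_dvd 2 w ==>
                has (fun u => zvec_dvd 4 (zvec_refl w u)) Ures)
      (box [:: z0] residues4).
Proof. by vm_compute. Qed.

Lemma mem_box s t w :
  [/\ zv0 w \in s, zv1 w \in t, zv2 w \in t & zv3 w \in t] -> w \in box s t.
Proof.
case: w => [[[a b] c] d] [/= ha hb hc hd]; pose pair' T U (x : T) (y : U) := (x, y).
exact: (allpairs_f (pair' _ _) (allpairs_f (pair' _ _) (allpairs_f (pair' _ _) ha hb) hc) hd).
Qed.

Lemma mem_small_zt (a b : int) :
  2 * a * a + 2 * a * b + 3 * b * b <= 8 -> (a, b) \in small_zt.
Proof.
move=> hab; rewrite mem_filter hab /=.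
have range (x : int) : -2 <= x <= 2 -> x \in [:: -2; -1; 0; 1; 2].
  move=> hx; have : x = -2 \/ x = -1 \/ x = 0 \/ x = 1 \/ x = 2 by lia.
  by case=> [->|[->|[->|[->|->]]]].
have ha : -2 <= a <= 2 by nia.
have hb : -2 <= b <= 2 by nia.
exact: (allpairs_f (fun x y => (x, y)) (range a ha) (range b hb)).
Qed.

(* The two components of [w . w = 4] combine into [sum_i |w_i|^2 + |w_i'|^2 = 8]. *)
Lemma zvec_norm4_small w : zvec_dot w w = pow4 1 ->
  [/\ zv0 w \in small_zt, zv1 w \in small_zt, zv2 w \in small_zt & zv3 w \in small_zt].
Proof.
case: w => [[[[a0 b0] [a1 b1]] [a2 b2]] [a3 b3]] [e1 e2].
rewrite expr1 in e1.
have q (a b : int) : 0 <= 2 * a * a + 2 * a * b + 3 * b * b by nia.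
have := q a0 b0; have := q a1 b1; have := q a2 b2; have := q a3 b3 => *.
by split; apply: mem_small_zt; nia.
Qed.

Lemma mem_cl4 w : zvec_dot w w = pow4 1 -> w \in cl4.
Proof.
move=> hw; have /allP/(_ w (mem_box (zvec_norm4_small hw))) := cl4_complete.
by rewrite hw eqxx.
Qed.

Lemma mem_cl3 w : zv0 w = z0 -> zvec_dot w w = pow4 1 -> w \in cl3.
Proof.
move=> h0 hw; have [_ ? ? ?] := zvec_norm4_small hw.
have /allP/(_ w) := cl3_complete; rewrite hw eqxx; apply.
by apply: mem_box; rewrite h0 mem_seq1.
Qed.

Lemma zt_dvd_add_scale4 m x y :
  (m %| 4)%Z -> zt_dvd m (zt_add x (zt_scale 4 y)) = zt_dvd m x.
Proof. by move=> m4; rewrite /zt_dvd /= !rpredDr // dvdz_mulr. Qed.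

Lemma zvec_dvd_add_scale4 m r z : (m %| 4)%Z ->
  zvec_dvd m (zvec_add r (zvec_map (zt_scale 4) z)) = zvec_dvd m r.
Proof. by move=> m4; rewrite /zvec_dvd /= !zt_dvd_add_scale4. Qed.

Lemma zvec_split_mod4 w :
  w = zvec_add (zvec_map (zt_mod 4) w) (zvec_map (zt_scale 4) (zvec_map (zt_div 4) w)).
Proof.
case: w => [[[[a0 b0] [a1 b1]] [a2 b2]] [a3 b3]].
by rewrite /zvec_add /zvec_map /zt_add /zt_scale /= !(mulrC 4) !(addrC (_ %% 4)%Z) -!divz_eq.
Qed.

Lemma zvec_norm_add_scale4 r z : exists y,
  zvec_dot (zvec_add r (zvec_map (zt_scale 4) z)) (zvec_add r (zvec_map (zt_scale 4) z))
  = zt_add (zvec_dot r r) (zt_scale 4 y).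
Proof.
exists (zt_add (zt_scale 2 (zvec_dot r z)) (zt_scale 4 (zvec_dot z z))).
case: r z => [[[[a0 b0] [a1 b1]] [a2 b2]] [a3 b3]] [[[[c0 d0] [c1 d1]] [c2 d2]] [c3 d3]].
cbv beta iota zeta delta [zvec_dot zvec_add zvec_map zt_add zt_scale zt_mul
  zv0 zv1 zv2 zv3 fst snd].
by congr pair; ring.
Qed.

Lemma zvec_refl_add_scale4 r z u :
  zvec_refl (zvec_add r (zvec_map (zt_scale 4) z)) u
  = zvec_add (zvec_refl r u) (zvec_map (zt_scale 4) (zvec_refl z u)).
Proof.
case: r z u => [[[[a0 b0] [a1 b1]] [a2 b2]] [a3 b3]] [[[[c0 d0] [c1 d1]] [c2 d2]] [c3 d3]].
case=> [[[[e0 f0] [e1 f1]] [e2 f2]] [e3 f3]].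
cbv beta iota zeta delta [zvec_refl zvec_dot zvec_add zvec_map zt_add zt_scale zt_mul
  zv0 zv1 zv2 zv3 fst snd].
by congr (_, _, _, _); congr pair; ring.
Qed.

Lemma mem_residues4 x : zt_mod 4 x \in residues4.
Proof.
have range (a : int) : (a %% 4)%Z \in [:: 0; 1; 2; 3].
  have : 0 <= (a %% 4)%Z < 4 by rewrite modz_ge0 ?ltz_pmod.
  move: (a %% 4)%Z => b hb; have : b = 0 \/ b = 1 \/ b = 2 \/ b = 3 by lia.
  by case=> [->|[->|[->|->]]].
exact: (allpairs_f (fun a b => (a, b)) (range _) (range _)).
Qed.

(* Both hypotheses and the conclusion only depend on [w] modulo [4]. *)
Lemma residue_reflection w : zv0 w = z0 -> zt_dvd 4 (zvec_dot w w) -> ~~ zvec_dvd 2 w ->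
  exists2 u, u \in Ures & zvec_dvd 4 (zvec_refl w u).
Proof.
move=> h0 hn hw; set r := zvec_map (zt_mod 4) w; set z := zvec_map (zt_div 4) w.
have ew : w = zvec_add r (zvec_map (zt_scale 4) z) := zvec_split_mod4 w.
have [y ey] := zvec_norm_add_scale4 r z.
have r_res : r \in box [:: z0] residues4.
  apply: mem_box; split; try exact: mem_residues4.
  have -> : zv0 r = zt_mod 4 (zv0 w) by [].
  by rewrite h0 /zt_mod /= mod0z.
have /allP/(_ r r_res) := residues_reflectable.
rewrite -(zt_dvd_add_scale4 _ y (dvdzz 4)) -ey -ew hn.
rewrite -(zvec_dvd_add_scale4 r z (isT : (2 %| 4)%Z)) -ew hw andbT implyTb => /hasP[u hu hr].
by exists u => //; rewrite ew zvec_refl_add_scale4 zvec_dvd_add_scale4.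
Qed.

Lemma nat_sqr_neq_5sqr (m n : nat) : (0 < n)%N -> (m * m != 5 * (n * n))%N.
Proof.
(* The exponent of [5] is even on the left and odd on the right. *)
move=> n0; apply/eqP => e.
have : (0 < m * m)%N by rewrite e !muln_gt0 n0.
rewrite muln_gt0 andbb => m0.
have := congr1 (logn 5) e.
rewrite !lognM ?muln_gt0 ?m0 ?n0 // (@logn_prime 5 5) // eqxx; lia.
Qed.

Lemma int_sqr_eq_5sqr (x y : int) : x * x = 5 * (y * y) -> y = 0.
Proof.
move=> e; apply/eqP; rewrite -absz_eq0; case: (posnP `|y|%N) => // y0.
by case/negP: (nat_sqr_neq_5sqr `|x| y0); apply/eqP; nia.
Qed.

Section Embedding.
Variable R : rcfType.

Definition ztr (x : zt) : R := x.1%:~R + x.2%:~R * tau R.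

Lemma tau_sqr : tau R ^+ 2 = tau R + 1.
Proof.
have s5 : Num.sqrt (5 : R) ^+ 2 = 5 by rewrite sqr_sqrtr // ler0n.
rewrite /tau; apply/eqP; rewrite -subr_eq0; apply/eqP.
transitivity ((Num.sqrt (5 : R) ^+ 2 - 5) / 4); first by field.
by rewrite s5 subrr mul0r.
Qed.

Lemma tau'E : tau' R = 1 - tau R.
Proof. by rewrite /tau' /tau; field. Qed.

Lemma ztr_add x y : ztr (zt_add x y) = ztr x + ztr y.
Proof. by rewrite /ztr !intrD; ring. Qed.

Lemma ztr_scale n x : ztr (zt_scale n x) = n%:~R * ztr x.
Proof. by rewrite /ztr !intrM; ring. Qed.

Lemma ztr_mul x y : ztr (zt_mul x y) = ztr x * ztr y.
Proof.
rewrite /ztr !intrD !intrM; apply/eqP; rewrite -subr_eq0; apply/eqP.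
transitivity (x.2%:~R * y.2%:~R * (tau R + 1 - tau R ^+ 2) : R); first by ring.
by rewrite tau_sqr subrr mulr0.
Qed.

Lemma ztr_eq0 x : ztr x = 0 -> x = z0.
Proof.
case: x => a b; rewrite /ztr /= => e.
have sqr5 : (2 * tau R - 1) ^+ 2 = 5.
  by rewrite sqrrB1 exprMn tau_sqr; ring.
(* [a + b tau = 0] gives [(2 a + b)^2 = b^2 (2 tau - 1)^2 = 5 b^2]. *)
have b0 : b = 0.
  apply: (@int_sqr_eq_5sqr (2 * a + b)); apply: (@intr_inj R).
  have ea : a%:~R = - (b%:~R * tau R) :> R by apply/eqP; rewrite -addr_eq0 e.
  rewrite !intrM intrD intrM ea.
  transitivity (b%:~R ^+ 2 * (2 * tau R - 1) ^+ 2 : R); first by ring.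
  by rewrite sqr5; ring.
by move: e; rewrite b0 mul0r addr0 => /eqP; rewrite intr_eq0 => /eqP ->.
Qed.

Lemma ztr_inj : injective ztr.
Proof.
move=> x y e; have := @ztr_eq0 (zt_add x (zt_scale (-1) y)).
rewrite ztr_add ztr_scale e mulN1r subrr => /(_ erefl).
by case: x y {e} => [a b] [c d] [h1 h2]; congr pair; lia.
Qed.

Lemma ztr_sign b x : ztr (zt_sign b x) = (-1) ^+ b * ztr x.
Proof. by case: b; rewrite /= ?ztr_scale ?mul1r. Qed.

Lemma ztr_z0 : ztr z0 = 0. Proof. by rewrite /ztr mul0r addr0. Qed.
Lemma ztr_z1 : ztr z1 = 1. Proof. by rewrite /ztr mul0r addr0. Qed.
Lemma ztr_z2 : ztr z2 = 2. Proof. by rewrite /ztr mul0r addr0. Qed.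
Lemma ztr_ztau : ztr ztau = tau R. Proof. by rewrite /ztr add0r mul1r. Qed.
Lemma ztr_ztau' : ztr ztau' = tau' R. Proof. by rewrite /ztr tau'E mulN1r. Qed.

Lemma tau_sqr_add : tau R ^+ 2 + tau' R ^+ 2 = 3.
Proof.
rewrite tau'E; transitivity (2 * tau R ^+ 2 - 2 * tau R + 1); first by ring.
by rewrite tau_sqr; ring.
Qed.

Lemma ztr_pow4 k : ztr (pow4 k) = 2 ^+ (k + k).
Proof. by rewrite /ztr /= mul0r addr0 rmorphXn /= exprD -exprMn; congr (_ ^+ _); ring. Qed.

Lemma ztr_div m x : zt_dvd m x -> ztr x = m%:~R * ztr (zt_div m x).
Proof.
case: x => a b /andP[/= ma mb]; rewrite /ztr /zt_div /=.
by rewrite -{1}(divzK ma) -{1}(divzK mb) !intrM; ring.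
Qed.
End Embedding.

(** * Reflections and the groups they generate *)

Section Reflections.
Variable R : rcfType.
Implicit Types (x y a : vec R) (g h : 'M[R]_4).

Lemma dotE x y : dot x y = \sum_i x 0 i * y 0 i.
Proof. by rewrite /dot mxE; apply: eq_bigr => i _; rewrite mxE. Qed.

Lemma dotC x y : dot x y = dot y x.
Proof. by rewrite !dotE; apply: eq_bigr => i _; rewrite mulrC. Qed.

Lemma dot_orthogonal h x y : h *m h^T = 1%:M -> dot (x *m h) (y *m h) = dot x y.
Proof. by move=> hh; rewrite /dot trmx_mul mulmxA -(mulmxA x) hh mulmx1. Qed.

Lemma orthogonal_invmx h : h *m h^T = 1%:M -> invmx h = h^T.
Proof.
move=> hh; have [hu _] := mulmx1_unit hh.
by rewrite -[invmx h]mulmx1 -hh mulmxA mulVmx // mul1mx.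
Qed.

Lemma refl_mul x a : x *m refl a = x - (2 * dot x a) *: a.
Proof.
rewrite /refl mulmxBr mulmx1 -scalemxAr mulmxA [x *m a^T]mx11_scalar.
by rewrite mul_scalar_mx scalerA mulrC.
Qed.

Lemma trmx_refl a : (refl a)^T = refl a.
Proof. by rewrite /refl linearB /= trmx1 linearZ /= trmx_mul trmxK. Qed.

Lemma refl_invol a : dot a a = 1 -> refl a *m refl a = 1%:M.
Proof.
move=> a1; have PP : a^T *m a *m (a^T *m a) = a^T *m a.
  by rewrite mulmxA -(mulmxA a^T) [a *m a^T]mx11_scalar -/(dot a a) a1 mulmx1.
rewrite /refl mulmxBl mul1mx mulmxBr mulmx1 -!scalemxAl -!scalemxAr PP scalerA.
by apply/matrixP => i j; rewrite !mxE; ring.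
Qed.
End Reflections.

Section Generation.
Variable R : rcfType.
Variable S : vec R -> Prop.
Hypothesis S_unit : forall a, S a -> dot a a = 1.

Lemma GenGroup_orthogonal g : GenGroup S g -> g *m g^T = 1%:M.
Proof.
elim=> {g} [|a Sa|g h _ gg _ hh|g _ gg].
- by rewrite trmx1 mulmx1.
- by rewrite trmx_refl refl_invol ?S_unit.
- by rewrite trmx_mul mulmxA -(mulmxA g) hh mulmx1 gg.
- by rewrite orthogonal_invmx // trmxK; apply: mulmx1C.
Qed.

Lemma GenGroup_unit g : GenGroup S g -> g \in unitmx.
Proof. by case/GenGroup_orthogonal/mulmx1_unit. Qed.

(* The second half, for [g^T = invmx g], is what the inverse case of the induction needs. *)
Lemma GenGroup_stable (P : vec R -> Prop) :
  (forall a x, S a -> P x -> P (x *m refl a)) -> forall g, GenGroup S g ->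
  (forall x, P x -> P (x *m g)) /\ (forall x, P x -> P (x *m g^T)).
Proof.
move=> PS g Gg; elim: Gg => {g} [|a Sa|g h _ [Pg Pg'] _ [Ph Ph']|g Gg [Pg Pg']].
- by rewrite trmx1; split=> x; rewrite mulmx1.
- by rewrite trmx_refl; split=> x; apply: PS.
- by rewrite trmx_mul; split=> x Px; rewrite mulmxA; [apply/Ph/Pg | apply/Pg'/Ph'].
- by rewrite orthogonal_invmx ?GenGroup_orthogonal // trmxK.
Qed.

Lemma GenGroup_fix v g : (forall a, S a -> dot v a = 0) -> GenGroup S g -> v *m g = v.
Proof.
move=> vS; elim=> {g} [|a Sa|g h _ vg _ vh|g Gg vg].
- exact: mulmx1.
- by rewrite refl_mul vS // mulr0 scale0r subr0.
- by rewrite mulmxA vg vh.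
- by rewrite -{1}vg mulmxK // GenGroup_unit.
Qed.

Lemma Orbit_mulmx x g : Orbit S x -> GenGroup S g -> Orbit S (x *m g).
Proof.
case=> h [a [Gh [Sa ->]]] Gg.
by exists (h *m g), a; rewrite mulmxA; split=> //; apply: GG_mul.
Qed.

Lemma Orbit_unit x : Orbit S x -> dot x x = 1.
Proof. by case=> g [a [Gg [Sa ->]]]; rewrite dot_orthogonal ?S_unit ?GenGroup_orthogonal. Qed.

Section Base.
Variable t : vec R.
Hypothesis S_to_t : forall a, S a -> exists h, GenGroup S h /\ a *m h = t.

Lemma Orbit_from_base x : Orbit S x -> exists h, GenGroup S h /\ x = t *m h.
Proof.
case=> g [a [Gg [Sa ->]]]; have [h [Gh <-]] := S_to_t Sa.
exists (invmx h *m g); split; first by apply: GG_mul => //; apply: GG_inv.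
by rewrite mulmxA mulmxK // GenGroup_unit.
Qed.

Lemma Orbit_transitive x y :
  Orbit S x -> Orbit S y -> exists g, GenGroup S g /\ y = x *m g.
Proof.
move=> /Orbit_from_base[hx [Gx ->]] /Orbit_from_base[hy [Gy ->]].
exists (invmx hx *m hy); split; first by apply: GG_mul => //; apply: GG_inv.
by rewrite mulmxA mulmxK // GenGroup_unit.
Qed.
End Base.
End Generation.

Lemma GenGroup_sub (R : rcfType) (S S' : vec R -> Prop) g :
  (forall a, S a -> S' a) -> GenGroup S g -> GenGroup S' g.
Proof.
move=> SS'; elim=> {g} [|a /SS' ?|g h _ ? _ ?|g _ ?];
  by [apply: GG_one | apply: GG_gen | apply: GG_mul | apply: GG_inv].
Qed.

Lemma Orbit_sub (R : rcfType) (S S' : vec R -> Prop) x :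
  (forall a, S a -> S' a) -> Orbit S x -> Orbit S' x.
Proof.
move=> SS' [g [a [Gg [Sa ->]]]]; exists g, a.
by split; [apply: GenGroup_sub Gg | split; [apply: SS'|]].
Qed.

Definition zcoord (w : zvec) (i : 'I_4) : zt := nth z0 [:: zv0 w; zv1 w; zv2 w; zv3 w] i.

Lemma zcoord_add w u i : zcoord (zvec_add w u) i = zt_add (zcoord w i) (zcoord u i).
Proof. by case: i => [[|[|[|[|//]]]] ?]. Qed.

Lemma zcoord_map f w i : zcoord (zvec_map f w) i = f (zcoord w i).
Proof. by case: i => [[|[|[|[|//]]]] ?]. Qed.

Lemma zvec_dvd_coord m w i : zvec_dvd m w -> zt_dvd m (zcoord w i).
Proof. by case/and4P; case: i => [[|[|[|[|//]]]] ?]. Qed.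

Definition zvec_of (f : 'I_4 -> zt) : zvec :=
  (f (@Ordinal 4 0 isT), f (@Ordinal 4 1 isT), f (@Ordinal 4 2 isT), f (@Ordinal 4 3 isT)).

Lemma zcoord_of f i : zcoord (zvec_of f) i = f i.
Proof. by case: i => [[|[|[|[|//]]]] ?]; congr f; apply: val_inj. Qed.

Section Lattice.
Variable R : rcfType.
Local Notation ztr := (@ztr R).

Lemma ztr_zvec_dot w u : ztr (zvec_dot w u) = \sum_i ztr (zcoord w i) * ztr (zcoord u i).
Proof. by rewrite !big_ord_recl big_ord0 addr0 /zvec_dot !ztr_add !ztr_mul !addrA. Qed.

Definition zrow (w : zvec) (k : nat) : vec R := \row_i (ztr (zcoord w i) / 2 ^+ k).

Definition is_zrow (x : vec R) : Prop := exists w k, x = zrow w k.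

Lemma zrow_dot w u k m : dot (zrow w k) (zrow u m) = ztr (zvec_dot w u) / 2 ^+ (k + m).
Proof.
rewrite dotE ztr_zvec_dot exprD invfM mulr_suml.
by apply: eq_bigr => i _; rewrite !mxE mulrACA.
Qed.

Lemma zrow_unit w k : dot (zrow w k) (zrow w k) = 1 <-> zvec_dot w w = pow4 k.
Proof.
have nz : (2 : R) ^+ (k + k) != 0 by rewrite expf_neq0 // pnatr_eq0.
rewrite zrow_dot; split=> [w1 | ->]; last by rewrite ztr_pow4 divff.
by apply: (@ztr_inj R); rewrite ztr_pow4 -[LHS](divfK nz) w1 mul1r.
Qed.

Lemma zrow_coord0 w k : zrow w k 0 0 = 0 <-> zv0 w = z0.
Proof.
rewrite mxE; have -> : zcoord w 0 = zv0 w by [].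
split=> [/eqP | ->]; last by rewrite ztr_z0 mul0r.
rewrite mulf_eq0 invr_eq0 expf_eq0 pnatr_eq0 andbF orbF.
by move=> /eqP; apply: ztr_eq0.
Qed.

Lemma zrow_map_coord f w k m :
  (forall i, ztr (f (zcoord w i)) / 2 ^+ m = ztr (zcoord w i) / 2 ^+ k) ->
  zrow (zvec_map f w) m = zrow w k.
Proof. by move=> hf; apply/rowP => i; rewrite !mxE zcoord_map hf. Qed.

Lemma zrow_scale2 w k : zrow (zvec_map (zt_scale 2) w) k.+1 = zrow w k.
Proof.
apply: zrow_map_coord => i; rewrite ztr_scale exprS.
by field; rewrite expf_neq0 // pnatr_eq0.
Qed.

Lemma zrow_div m j w k : m%:~R = 2 ^+ j :> R -> zvec_dvd m w ->
  zrow (zvec_map (zt_div m) w) k = zrow w (k + j).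
Proof.
move=> mj mw; apply: zrow_map_coord => i.
rewrite [ztr (zcoord w i)](ztr_div R (zvec_dvd_coord i mw)) mj exprD.
by field; rewrite !expf_neq0 // pnatr_eq0.
Qed.

Lemma zrow_refl w u k : zrow w k *m refl (zrow u 1) = zrow (zvec_refl w u) k.+1.
Proof.
rewrite refl_mul zrow_dot addn1; apply/rowP => i.
rewrite !mxE zcoord_add !zcoord_map ztr_add !ztr_scale ztr_mul exprS.
by field; rewrite expf_neq0 // pnatr_eq0.
Qed.

Lemma zrow_refl_step w u w' :
  refl_step w u = Some w' -> zrow w' 1 = zrow w 1 *m refl (zrow u 1).
Proof.
rewrite /refl_step; case: ifP => // w2 [<-].
by rewrite zrow_refl (zrow_div (j := 1)) // expr1.
Qed.

Lemma is_zrow_refl x u : is_zrow x -> is_zrow (x *m refl (zrow u 1)).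
Proof. by case=> w [k ->]; exists (zvec_refl w u), k.+1; rewrite zrow_refl. Qed.

Lemma zrow_of (f : 'I_4 -> zt) (a : vec R) :
  (forall i, a 0 i = ztr (f i) / 2) -> a = zrow (zvec_of f) 1.
Proof. by move=> fa; apply/rowP => i; rewrite !mxE zcoord_of fa expr1. Qed.

End Lattice.

(** * The roots [Delta] and [Delta'] *)

Section Roots.
Variable R : rcfType.
Local Notation ztr := (@ztr R).
Local Notation zrow := (@zrow R).

Lemma DeltaGen_unit (t t' : R) (a : vec R) :
  t ^+ 2 + t' ^+ 2 = 3 -> DeltaGen t t' a -> dot a a = 1.
Proof.
move=> tt' [[i [b ->]] | [[b ->] | [s [_ [b ->]]]]]; rewrite dotE.
- rewrite (bigD1 i) //= big1 => [|j /negbTE ji]; rewrite !mxE ?ji ?eqxx ?mulr0 ?mul0r //.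
  by rewrite addr0 mulr1 -expr2 sqrr_sign.
- under eq_bigr => j _ do rewrite !mxE -expr2 expr_div_n sqrr_sign.
  by rewrite sumr_const card_ord; field.
- under eq_bigr => j _ do rewrite !mxE -expr2 !expr_div_n exprMn sqrr_sign mul1r.
  have -> : \sum_(j < 4) [:: 0; 1; t'; t]`_(s j) ^+ 2 / 2 ^+ 2
          = \sum_(j < 4) [:: 0; 1; t'; t]`_j ^+ 2 / 2 ^+ 2 :> R.
    by rewrite [RHS](reindex_inj (@perm_inj _ s)).
  rewrite !big_ord_recl big_ord0 /=.
  transitivity ((t ^+ 2 + t' ^+ 2 + 1) / 2 ^+ 2); first by field.
  by rewrite tt'; field.
Qed.

Lemma DeltaGen_zrow ct ct' (a : vec R) :
  DeltaGen (ztr ct) (ztr ct') a -> exists u, a = zrow u 1.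
Proof.
move=> [[i [b ->]] | [[b ->] | [s [_ [b ->]]]]].
- exists (zvec_of (fun j => if j == i then zt_sign b z2 else z0)); apply: zrow_of => j.
  by rewrite !mxE eqxx /=; case: (j == i); rewrite ?ztr_sign ?ztr_z2 ?ztr_z0 /=; field.
- exists (zvec_of (fun j => zt_sign (b j) z1)); apply: zrow_of => j.
  by rewrite mxE ztr_sign ztr_z1 mulr1.
- exists (zvec_of (fun j => zt_sign (b (s j)) (nth z0 [:: z0; z1; ct'; ct] (s j)))).
  apply: zrow_of => j; rewrite mxE ztr_sign; congr (_ * _ / _).
  by case: (s j) => [[|[|[|[|//]]]] ?] /=; rewrite ?ztr_z0 ?ztr_z1.
Qed.

Lemma DD_unit (a : vec R) : DD a -> dot a a = 1.
Proof.
by case=> Da; [apply: DeltaGen_unit Da | apply: DeltaGen_unit Da];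
  rewrite ?tau_sqr_add // addrC tau_sqr_add.
Qed.

Lemma DD_zrow (a : vec R) : DD a -> exists u, a = zrow u 1.
Proof. by rewrite /DD /Delta /Delta' -ztr_ztau -ztr_ztau'; case=> /DeltaGen_zrow. Qed.

Lemma DD3_DD (a : vec R) : DD3 a -> DD a.
Proof. by case. Qed.

Lemma DD3_unit (a : vec R) : DD3 a -> dot a a = 1.
Proof. by move/DD3_DD/DD_unit. Qed.

Lemma zrow_zunit (i : 'I_4) : zrow (zunit i) 1 = delta_mx 0 i.
Proof.
apply/rowP => j; rewrite !mxE expr1.
by case: i j => [[|[|[|[|//]]]] ?] [[|[|[|[|//]]]] ?];
  rewrite /= ?ztr_z2 ?ztr_z0 ?mul0r ?divff ?pnatr_eq0.
Qed.

Lemma DD_zunit (i : 'I_4) : DD (zrow (zunit i) 1).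
Proof. by left; left; exists i, false; rewrite scale1r zrow_zunit. Qed.

Lemma DD_zhalf b : DD (zrow (zhalf b) 1).
Proof.
left; right; left; exists [ffun j : 'I_4 => nth false [:: b.1.1.1; b.1.1.2; b.1.2; b.2] j].
apply/rowP => j; rewrite !mxE ffunE expr1.
by case: j => [[|[|[|[|//]]]] ?]; rewrite /= ztr_sign ztr_z1 mulr1.
Qed.

Lemma DeltaGen_zgolden x y b : DeltaGen (ztr y) (ztr x) (zrow (zgolden x y b) 1).
Proof.
right; right; exists 1%g; split; first by rewrite odd_perm1.
exists [ffun j : 'I_4 => nth false [:: false; b.1.1; b.1.2; b.2] j].
apply/rowP => j; rewrite !mxE perm1 ffunE expr1.
by case: j => [[|[|[|[|//]]]] ?]; rewrite /= ?ztr_sign ?ztr_z0 ?ztr_z1 ?mulr0 ?mulr1.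
Qed.

Lemma DD3_zrow w : DD (zrow w 1) -> zv0 w = z0 -> DD3 (zrow w 1).
Proof. by move=> Dw /(zrow_coord0 R w 1). Qed.

Lemma DD3_zgolden b :
  DD3 (zrow (zgolden ztau' ztau b) 1) /\ DD3 (zrow (zgolden ztau ztau' b) 1).
Proof.
split; apply: DD3_zrow => //; [left | right];
  by rewrite /Delta /Delta' -ztr_ztau -ztr_ztau'; apply: DeltaGen_zgolden.
Qed.

Lemma U3_DD3 u : u \in U3 -> DD3 (zrow u 1).
Proof.
rewrite !inE => /orP[|/orP[|/orP[|/orP[]]]] /eqP ->; try exact: (DD3_zgolden _).1;
  try exact: (DD3_zgolden _).2.
- exact: DD3_zrow (DD_zunit (@Ordinal 4 1 isT)) _.
- exact: DD3_zrow (DD_zunit (@Ordinal 4 2 isT)) _.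
- exact: DD3_zrow (DD_zunit (@Ordinal 4 3 isT)) _.
Qed.

Lemma U4_DD u : u \in U4 -> DD (zrow u 1).
Proof.
rewrite inE => /orP[/eqP -> | ]; first exact: (DD_zunit 0).
rewrite inE => /orP[/eqP -> | ]; first exact: DD_zhalf.
rewrite inE => /orP[/eqP -> | /U3_DD3/DD3_DD //]; exact: DD_zhalf.
Qed.

Lemma Ures_DD3 u : u \in Ures -> DD3 (zrow u 1).
Proof.
case/allpairsP => -[xy b] [/= + _ ->].
by rewrite !inE => /orP[] /eqP ->; [apply: (DD3_zgolden _).1 | apply: (DD3_zgolden _).2].
Qed.
End Roots.

(** * Transitivity and descent *)

Section Transitivity.
Variable R : rcfType.
Local Notation zrow := (@zrow R).

Lemma zclosure_reaches (S : vec R -> Prop) (U : seq zvec) (t : vec R) n (s0 : seq zvec) :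
  (forall a, S a -> dot a a = 1) -> (forall u, u \in U -> S (zrow u 1)) ->
  (forall w, w \in s0 -> exists h, GenGroup S h /\ zrow w 1 *m h = t) ->
  forall w, w \in zclosure n U s0 -> exists h, GenGroup S h /\ zrow w 1 *m h = t.
Proof.
move=> S_unit SU reach0; elim: n => [|n IH] w /=; first exact: reach0.
rewrite mem_undup mem_cat => /orP[/IH // | ].
rewrite mem_pmap map_id => /allpairsP[[x u] [/= xs uU /esym/zrow_refl_step ew]].
have [h [Gh xh]] := IH x xs.
have Su := SU u uU; exists (refl (zrow u 1) *m h).
split; first by apply: GG_mul => //; apply: GG_gen.
by rewrite mulmxA ew -(mulmxA (zrow x 1)) refl_invol ?mulmx1 ?S_unit.
Qed.

Local Notation e1 := (zrow (zunit 0) 1).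
Local Notation e2 := (zrow (zunit 1) 1).

Lemma dot_e1 (x : vec R) : dot x e1 = x 0 0.
Proof. by rewrite (zrow_zunit R 0) /dot trmx_delta -colE mxE. Qed.

Lemma reach_seq1 (S : vec R -> Prop) w v :
  v \in [:: w] -> exists h, GenGroup S h /\ zrow v 1 *m h = zrow w 1.
Proof. by rewrite mem_seq1 => /eqP ->; exists 1%:M; split; [apply: GG_one | apply: mulmx1]. Qed.

Lemma DD_to_e1 (a : vec R) : DD a -> exists h, Hinf h /\ a *m h = e1.
Proof.
move=> Da; have [u eu] := DD_zrow Da.
have u_cl4 : u \in cl4 by apply/mem_cl4/(zrow_unit R); rewrite -eu DD_unit.
by rewrite eu; apply: (zclosure_reaches (@DD_unit R) (@U4_DD R) (@reach_seq1 _ _) u_cl4).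
Qed.

Lemma zrow_to_e2_level1 u : zv0 u = z0 -> zvec_dot u u = pow4 1 ->
  exists h, H3 h /\ zrow u 1 *m h = e2.
Proof.
move=> u0 uu.
exact: (zclosure_reaches (@DD3_unit R) (@U3_DD3 R) (@reach_seq1 _ _) (mem_cl3 u0 uu)).
Qed.

Lemma H3_fix_e1 g : H3 g -> e1 *m g = e1.
Proof. by apply: (GenGroup_fix (@DD3_unit R)) => a [_ a0]; rewrite dotC dot_e1. Qed.

Lemma H3_coord0 g (x : vec R) : H3 g -> (x *m g) 0 0 = x 0 0.
Proof.
move=> Hg; rewrite -!dot_e1 -{1}(H3_fix_e1 Hg) dot_orthogonal //.
exact: (GenGroup_orthogonal (@DD3_unit R)).
Qed.

(* A vector [w / 2^k] of [Sigma] with [w_1 = 0] is lowered to level [k - 1], either by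
   halving [w] or, when [w] is odd, by a reflection making it divisible by [4]. *)
Lemma zrow_to_e2 k w : dot (zrow w k) (zrow w k) = 1 -> zrow w k 0 0 = 0 ->
  exists h, H3 h /\ zrow w k *m h = e2.
Proof.
elim/ltn_ind: k w => -[|[|k]] IH w w1 w0.
- rewrite -zrow_scale2 in w1 w0 *.
  exact: zrow_to_e2_level1 (proj1 (zrow_coord0 R _ _) w0) (proj1 (zrow_unit R _ _) w1).
- exact: zrow_to_e2_level1 (proj1 (zrow_coord0 R _ _) w0) (proj1 (zrow_unit R _ _) w1).
have [w2 | w2] := boolP (zvec_dvd 2 w).
  rewrite -[k.+2]addn1 -(@zrow_div R 2 1 w k.+1) // in w1 w0 *.
  exact: IH.
have w4 : zt_dvd 4 (zvec_dot w w).
  by move/(zrow_unit R): w1 => ->; rewrite /zt_dvd /= dvdz0 andbT exprS dvdz_mulr.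
have [u uU r4] := residue_reflection (proj1 (zrow_coord0 R w _) w0) w4 w2.
have Hu : H3 (refl (zrow u 1)) by apply: GG_gen; apply: Ures_DD3.
set w' := zvec_map (zt_div 4) (zvec_refl w u).
have ew : zrow w k.+2 *m refl (zrow u 1) = zrow w' k.+1.
  have four : (4 : int)%:~R = 2 ^+ 2 :> R by rewrite expr2; ring.
  by rewrite zrow_refl (@zrow_div R 4 2 _ k.+1) ?addn2.
have w'1 : dot (zrow w' k.+1) (zrow w' k.+1) = 1.
  by rewrite -ew dot_orthogonal ?(GenGroup_orthogonal (@DD3_unit R) Hu).
have w'0 : zrow w' k.+1 0 0 = 0 by rewrite -ew H3_coord0.
have [h [Hh eh]] := IH k.+1 (ltnSn _) w' w'1 w'0.
by exists (refl (zrow u 1) *m h); split; [apply: GG_mul | rewrite mulmxA ew].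
Qed.

Lemma DD3_to_e2 (a : vec R) : DD3 a -> exists h, H3 h /\ a *m h = e2.
Proof.
move=> D3a; have [u eu] := DD_zrow (DD3_DD D3a); rewrite eu.
by apply: zrow_to_e2; rewrite -eu; [apply: DD3_unit | case: D3a].
Qed.

Lemma Sigma_is_zrow (x : vec R) : Sigma x -> is_zrow x.
Proof.
case=> g [a [Gg [Da ->]]]; have [u ->] := DD_zrow Da.
have refl_zrow (b y : vec R) : DD b -> is_zrow y -> is_zrow (y *m refl b).
  by move=> /DD_zrow[v ->]; apply: is_zrow_refl.
by apply: (GenGroup_stable (@DD_unit R) refl_zrow Gg).1; exists u, 1%N.
Qed.

Lemma Sigma3E (x : vec R) : Sigma3 x <-> Sigma x /\ x 0 0 = 0.
Proof.
split=> [S3x | [Sx x0]].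
  split; first exact: (Orbit_sub (@DD3_DD R) S3x).
  by case: S3x => g [a [Hg [[_ a0] ->]]]; rewrite H3_coord0.
have [w [k ex]] := Sigma_is_zrow Sx.
have x1 : dot (zrow w k) (zrow w k) = 1 by rewrite -ex (Orbit_unit (@DD_unit R)).
rewrite ex in x0; have [h [Hh eh]] := zrow_to_e2 x1 x0.
exists (invmx h), e2; split; first exact: GG_inv.
split; first exact: (U3_DD3 R (mem_head _ _)).
by rewrite -eh mulmxK ?ex // (GenGroup_unit (@DD3_unit R)).
Qed.

Lemma Hinf_transitive (x y : vec R) : Sigma x -> Sigma y -> exists g, Hinf g /\ y = x *m g.
Proof. exact: (Orbit_transitive (@DD_unit R) DD_to_e1). Qed.

Lemma H3_transitive (x y : vec R) : Sigma3 x -> Sigma3 y -> exists g, H3 g /\ y = x *m g.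
Proof. exact: (Orbit_transitive (@DD3_unit R) DD3_to_e2). Qed.

Lemma Sigma_orthogonal (alpha : vec R) : Sigma alpha ->
  exists g, Hinf g /\ forall beta, (Sigma beta /\ dot beta alpha = 0) <->
                                   (exists gamma, Sigma3 gamma /\ beta = gamma *m g).
Proof.
move=> /(Orbit_from_base (@DD_unit R) DD_to_e1)[h [Hh ->]].
have hh := GenGroup_orthogonal (@DD_unit R) Hh.
have hu := GenGroup_unit (@DD_unit R) Hh.
exists h; split=> // beta; split=> [[Sb b0] | [gamma [/Sigma3E[Sg g0] ->]]].
  exists (beta *m invmx h); rewrite mulmxKV //; split=> //; apply/Sigma3E; split.
    by apply: Orbit_mulmx => //; apply: GG_inv.
  by rewrite -dot_e1 -(dot_orthogonal _ _ hh) mulmxKV.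
by split; [apply: Orbit_mulmx | rewrite dot_orthogonal // dot_e1].
Qed.

Lemma Hinf_stabilizer_H3 (alpha : vec R) : Sigma alpha -> exists h, Hinf h /\
  forall g, H3 g -> Hinf (invmx h *m g *m h) /\ alpha *m (invmx h *m g *m h) = alpha.
Proof.
move=> /(Orbit_from_base (@DD_unit R) DD_to_e1)[h [Hh ->]].
exists h; split=> // g Hg; split.
  apply: GG_mul => //; apply: GG_mul; first exact: GG_inv.
  exact: (GenGroup_sub (@DD3_DD R) Hg).
by rewrite !mulmxA mulmxK ?(GenGroup_unit (@DD_unit R)) // H3_fix_e1.
Qed.
End Transitivity.

Theorem mainTheorem10 (R : rcfType) :
  (forall x y : vec R, Sigma x -> Sigma y ->
     exists g, Hinf g /\ y = x *m g)
  /\ (forall x y : vec R, Sigma3 x -> Sigma3 y ->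
     exists g, H3 g /\ y = x *m g)
  /\ (forall alpha : vec R, Sigma alpha ->
     exists g, Hinf g /\
       forall beta : vec R, (Sigma beta /\ dot beta alpha = 0) <->
         (exists gamma, Sigma3 gamma /\ beta = gamma *m g))
  /\ (forall alpha : vec R, Sigma alpha ->
     exists h, Hinf h /\
       forall g, H3 g ->
         Hinf (invmx h *m g *m h) /\ alpha *m (invmx h *m g *m h) = alpha).
Proof.
split; first exact: Hinf_transitive.
split; first exact: H3_transitive.
split; first exact: Sigma_orthogonal.
exact: Hinf_stabilizer_H3.
Qed.
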